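(* The relation $\le_{\rm cx}$ is a preorder (reflexive and transitive) on the space $L^0$ of all real-valued random variables on an atomless probability space.
   Context: An expectation $\mathbb E[Z]$ is well-defined if $\mathbb E[\max\{Z,0\}]<\infty$ or $\mathbb E[\max\{-Z,0\}]<\infty$. $X\le_{\rm cx}Y$ means $\mathbb E[u(X)]\le\mathbb E[u(Y)]$ for all convex $u:\mathbb R\to\mathbb R$ such that both expectations are well-defined. *)

From HB Require Import structures.
From mathcomp Require Import all_boot all_order all_algebra.
From mathcomp Require Import all_classical all_reals all_analysis.
Set Implicit Arguments. Unset Strict Implicit. Unset Printing Implicit Defensive.
Import Order.TTheory GRing.Theory Num.Theory.
Local Open Scope classical_set_scope.
Local Open Scope ring_scope.

Definition convex_fun (R : realType) (u : R -> R) : Prop :=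
  forall (x y t : R), 0 <= t -> t <= 1 ->
    u (t * x + (1 - t) * y) <= t * u x + (1 - t) * u y.

Definition atomless (d : measure_display) (T : measurableType d) (R : realType)
    (P : probability T R) : Prop :=
  forall A : set T, measurable A -> (0 < P A)%E ->
    exists B : set T, [/\ measurable B, B `<=` A, (0 < P B)%E & (P B < P A)%E].

Definition expect (d : measure_display) (T : measurableType d) (R : realType)
    (P : probability T R) (Z : T -> R) : \bar R :=
  (\int[P]_(x in setT) (Z x)%:E)%E.

Definition expect_welldef (d : measure_display) (T : measurableType d) (R : realType)
    (P : probability T R) (Z : T -> R) : Prop :=
  (expect P (fun x => Num.max (Z x) 0%R) < +oo)%E \/
  (expect P (fun x => Num.max (- Z x)%R 0%R) < +oo)%E.

Definition cx_le (d : measure_display) (T : measurableType d) (R : realType)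
    (P : probability T R) (X Y : T -> R) : Prop :=
  forall u : R -> R, convex_fun u ->
    expect_welldef P (u \o X) -> expect_welldef P (u \o Y) ->
    (expect P (u \o X) <= expect P (u \o Y))%E.

From HB Require Import structures.
From mathcomp Require Import all_boot all_order all_algebra.
From mathcomp Require Import all_classical all_reals all_analysis.
Set Implicit Arguments.
Unset Strict Implicit.
Unset Printing Implicit Defensive.

Local Open Scope classical_set_scope.
Local Open Scope ring_scope.
Import Order.TTheory GRing.Theory Num.Theory.

(* Reflexivity is immediate, and transitivity is too unless E[u(Y)] is not
   well-defined, i.e. E[u(Y)^+] = E[u(Y)^-] = +oo. In that case E[u(Z)] = +oo:
   the positive part [max u 0] is again convex and its expectations are always
   well-defined, so Y <=_cx Z gives E[u(Z)^+] >= E[u(Y)^+] = +oo, while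
   E[u(Z)^-] < +oo because E[u(Z)] is well-defined. *)

Lemma convex_fun_max0 (R : realType) (u : R -> R) :
  convex_fun u -> convex_fun (fun y => Num.max (u y) 0).
Proof.
move=> cu x y t t0 t1; have t1' : 0 <= 1 - t by rewrite subr_ge0.
rewrite ge_max; apply/andP; split; last first.
  by rewrite addr_ge0 // mulr_ge0 // le_max lexx orbT.
apply: le_trans (cu x y t t0 t1) _.
by rewrite lerD // ler_wpM2l // le_max lexx.
Qed.

Section expect_parts.
Variables (d : measure_display) (T : measurableType d) (R : realType)
  (P : probability T R).

Definition expect_pos (Z : T -> R) := expect P (fun x => Num.max (Z x) 0).
Definition expect_neg (Z : T -> R) := expect P (fun x => Num.max (- Z x) 0).

Lemma expectE (Z : T -> R) : expect P Z = (expect_pos Z - expect_neg Z)%E.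
Proof.
rewrite /expect_pos /expect_neg /expect integralE.
by congr (_ - _)%E; apply: eq_integral => x _;
  rewrite ?funeposE ?funenegE /= /maxe /Order.max /= lte_fin; case: ifP.
Qed.

Lemma expect_neg_ge0 (Z : T -> R) : (0 <= expect_neg Z)%E.
Proof. by apply: integral_ge0 => x _; rewrite lee_fin le_max lexx orbT. Qed.

Lemma expect_pos_max0 (Z : T -> R) :
  expect_pos (fun x => Num.max (Z x) 0) = expect_pos Z.
Proof.
apply: eq_integral => x _.
by rewrite (max_idPl (_ : 0 <= Num.max (Z x) 0)) // le_max lexx orbT.
Qed.

Lemma expect_neg_max0 (Z : T -> R) :
  expect_neg (fun x => Num.max (Z x) 0) = 0%E.
Proof.
apply: integral0_eq => x _.
by rewrite (max_idPr (_ : - Num.max (Z x) 0 <= 0)) // oppr_le0 le_max lexx orbT.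
Qed.

Lemma expect_max0 (Z : T -> R) :
  expect P (fun x => Num.max (Z x) 0) = expect_pos Z.
Proof. by rewrite expectE expect_neg_max0 sube0 expect_pos_max0. Qed.

Lemma expect_welldef_max0 (Z : T -> R) :
  expect_welldef P (fun x => Num.max (Z x) 0).
Proof. by right; rewrite -/(expect_neg _) expect_neg_max0 ltry. Qed.

Lemma not_expect_welldef_pos (Z : T -> R) :
  ~ expect_welldef P Z -> expect_pos Z = +oo%E.
Proof.
move=> nwZ; apply/eqP; rewrite eq_le leey /= leNgt; apply/negP => Zfin.
by apply: nwZ; left.
Qed.

Lemma expect_welldef_pos_pinfty (Z : T -> R) :
  expect_welldef P Z -> expect_pos Z = +oo%E -> expect P Z = +oo%E.
Proof.
move=> wZ posZ; have negZ : (expect_neg Z < +oo)%E.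
  by case: wZ => //; rewrite -/(expect_pos _) posZ ltxx.
have : expect_neg Z \is a fin_num by rewrite ge0_fin_numE ?expect_neg_ge0.
rewrite -fin_numN fin_numE => /andP[NnegZ_neqNy _].
by rewrite expectE posZ addye.
Qed.

Lemma cx_le_expect_pos_pinfty (Y Z : T -> R) (u : R -> R) :
  cx_le P Y Z -> convex_fun u ->
  expect_pos (u \o Y) = +oo%E -> expect_pos (u \o Z) = +oo%E.
Proof.
move=> YZ cu posY; apply/eqP; rewrite -leye_eq -posY -!expect_max0.
exact: YZ _ (convex_fun_max0 cu) (expect_welldef_max0 (u \o Y))
  (expect_welldef_max0 (u \o Z)).
Qed.

Lemma cx_le_refl (X : T -> R) : cx_le P X X.
Proof. by move=> u _ _ _; exact: lexx. Qed.

Lemma cx_le_trans (X Y Z : T -> R) : cx_le P X Y -> cx_le P Y Z -> cx_le P X Z.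
Proof.
move=> XY YZ u cu wX wZ.
have [wY|nwY] := pselect (expect_welldef P (u \o Y)).
  exact: le_trans (XY u cu wX wY) (YZ u cu wY wZ).
have posZ := cx_le_expect_pos_pinfty YZ cu (not_expect_welldef_pos nwY).
by rewrite (expect_welldef_pos_pinfty wZ posZ) leey.
Qed.

End expect_parts.

Theorem proposition2 (d : measure_display) (T : measurableType d) (R : realType)
    (P : probability T R) (hP : atomless P) :
  (forall X : T -> R, measurable_fun setT X -> cx_le P X X) /\
  (forall X Y Z : T -> R,
      measurable_fun setT X -> measurable_fun setT Y -> measurable_fun setT Z ->
      cx_le P X Y -> cx_le P Y Z -> cx_le P X Z).
Proof.
split=> [X _ | X Y Z _ _ _]; [exact: cx_le_refl | exact: cx_le_trans].
Qed.
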